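(* For $n\ge 3$, the commutator subgroup $[P_n,P_n]$ of the pure braid group $P_n$ is densely ordered by the restriction of the Dehornoy ordering of $B_n$.
   Context: $B_n$ is the Artin braid group with generators $\sigma_1,\dots,\sigma_{n-1}$; $P_n$ is the kernel of the natural map $B_n\to S_n$ to the symmetric group. A word in the generators is $i$-positive if it contains only $\sigma_1,\dots,\sigma_i$ and their inverses, $\sigma_i$ occurs, and every occurrence of $\sigma_i$ has positive exponent; a braid is $i$-positive if some representative word is. The Dehornoy ordering is the left-invariant total order on $B_n$ whose positive cone consists of all braids that are $i$-positive for some $i$. A subgroup is densely ordered if it has no least positive element (equivalently, between any two of its elements lies a third). *)

From mathcomp Require Import all_boot.
Set Implicit Arguments. Unset Strict Implicit. Unset Printing Implicit Defensive.

(* A letter (i, true) is sigma_i, (i, false) is sigma_i^{-1}; 1 <= i <= n-1. *)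
Definition letter := (nat * bool)%type.
Definition word := seq letter.

Definition valid (n : nat) (w : word) : bool :=
  all (fun l : letter => (0 < l.1) && (l.1 < n)) w.

Definition winv (w : word) : word := rev (map (fun l : letter => (l.1, ~~ l.2)) w).

Inductive braid_step (n : nat) : word -> word -> Prop :=
| bs_free i b : 0 < i < n -> braid_step n [:: (i, b); (i, ~~ b)] [::]
| bs_comm i j b c : 0 < i < n -> 0 < j < n -> (i.+1 < j) || (j.+1 < i) ->
    braid_step n [:: (i, b); (j, c)] [:: (j, c); (i, b)]
| bs_braid i : 0 < i -> i.+1 < n ->
    braid_step n [:: (i, true); (i.+1, true); (i, true)]
                 [:: (i.+1, true); (i, true); (i.+1, true)].

Inductive beq (n : nat) : word -> word -> Prop :=
| beq_step u v a b : braid_step n a b -> beq n (u ++ a ++ v) (u ++ b ++ v)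
| beq_refl w : beq n w w
| beq_sym w w' : beq n w w' -> beq n w' w
| beq_trans w1 w2 w3 : beq n w1 w2 -> beq n w2 w3 -> beq n w1 w3.

Definition ipos_word (i : nat) (w : word) : bool :=
  all (fun l : letter => (0 < l.1) && (l.1 <= i)) w &&
  has (fun l : letter => l.1 == i) w &&
  all (fun l : letter => (l.1 == i) ==> l.2) w.

(* Positive cone of the Dehornoy ordering of B_n. *)
Definition dpos (n : nat) (w : word) : Prop :=
  exists w' : word, [/\ beq n w w', valid n w' & exists i, ipos_word i w'].

(* Image of the braid in S_n, acting on positions 1..n. *)
Definition swap_at (i k : nat) : nat :=
  if k == i then i.+1 else if k == i.+1 then i else k.
Definition perm_act (w : word) (k : nat) : nat :=
  foldr (fun l : letter => swap_at l.1) k w.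

Definition pure (n : nat) (w : word) : bool :=
  [forall k : 'I_n, perm_act w k.+1 == k.+1].

Definition commw (a b : word) : word := winv a ++ winv b ++ a ++ b.

(* Membership in the commutator subgroup [P_n, P_n]: a product of commutators
   of pure braids (closed under inverses since [a,b]^{-1} = [b,a]). *)
Definition in_comm_PP (n : nat) (w : word) : Prop :=
  exists ps : seq (word * word),
    all (fun p : word * word =>
           [&& valid n p.1, valid n p.2, pure n p.1 & pure n p.2]) ps /\
    beq n w (flatten (map (fun p : word * word => commw p.1 p.2) ps)).

(* The subgroup (given by a membership predicate) is densely ordered by the
   restricted Dehornoy order: no least positive element, i.e. every positive
   element w of H has a positive v in H with v < w, i.e. v^{-1} w positive. *)
Definition densely_ordered_sub (n : nat) (H : word -> Prop) : Prop :=
  forall w, valid n w -> H w -> dpos n w ->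
    exists v, [/\ valid n v, H v, dpos n v & dpos n (winv v ++ w)].

From mathcomp Require Import all_boot zify.

Set Implicit Arguments. Unset Strict Implicit. Unset Printing Implicit Defensive.

(* Let p1 = s1^-2 and p2 = s2^2, both pure, and Y = [p1, p2] = p1^-1 p2^-1 p1 p2
   in [P_n, P_n].  In B_3 both Y^-1 and s2 Y are represented by 2-positive
   words.  Take w > 1 in [P_n, P_n], represented by an i-positive word.  Since
   w has exponent sum 0, i > 1.  If i >= 3, then 1 < Y^-1 < w because Y w is
   still i-positive.  If i = 2, write w = A s2 S with S a word in s1 only, and
   put v = w S^-1 Y S = w [S^-1 p1 S, S^-1 p2 S]: v = A (s2 Y) S and
   v^-1 w = S^-1 Y^-1 S are 2-positive, so 1 < v < w. *)

Lemma winv_cat u v : winv (u ++ v) = winv v ++ winv u.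
Proof. by rewrite /winv map_cat rev_cat. Qed.

Lemma winv_cons l w : winv (l :: w) = winv w ++ [:: (l.1, ~~ l.2)].
Proof. by rewrite /winv /= rev_cons -cats1. Qed.

Lemma winvK : involutive winv.
Proof.
by elim=> [|[i b] w IH] //; rewrite winv_cons winv_cat IH /= negbK.
Qed.

Lemma valid_cat n u v : valid n (u ++ v) = valid n u && valid n v.
Proof. exact: all_cat. Qed.

Lemma valid_winv n w : valid n (winv w) = valid n w.
Proof. by rewrite /valid /winv all_rev all_map. Qed.

Lemma valid_widen m n w : m <= n -> valid m w -> valid n w.
Proof.
move=> le_mn /allP vw; apply/allP=> l /vw /andP[-> lt_lm].
exact: leq_trans le_mn.
Qed.

Lemma valid_commw n p q : valid n (commw p q) = valid n p && valid n q.
Proof. by rewrite /commw !valid_cat !valid_winv; case: (valid n p); case: (valid n q). Qed.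

Lemma winv_commw p q : winv (commw p q) = commw q p.
Proof. by rewrite /commw !winv_cat !winvK !catA. Qed.

Definition wconj (S u : word) : word := winv S ++ u ++ S.

Lemma valid_wconj n S u : valid n (wconj S u) = valid n S && valid n u.
Proof. by rewrite /wconj !valid_cat valid_winv; case: (valid n S); case: (valid n u). Qed.

Lemma winv_wconj S u : winv (wconj S u) = wconj S (winv u).
Proof. by rewrite /wconj !winv_cat winvK catA. Qed.

Section BraidEquality.

Variable n : nat.

Lemma beq_catl x u u' : beq n u u' -> beq n (x ++ u) (x ++ u').
Proof.
elim=> [u0 v a b st|w|w1 w2 _ IH|w1 w2 w3 _ IH1 _ IH2].
- by have := beq_step (x ++ u0) v st; rewrite -!catA.
- exact: beq_refl.
- exact: beq_sym.
- exact: beq_trans IH1 IH2.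
Qed.

Lemma beq_catr x u u' : beq n u u' -> beq n (u ++ x) (u' ++ x).
Proof.
elim=> [u0 v a b st|w|w1 w2 _ IH|w1 w2 w3 _ IH1 _ IH2].
- by have := beq_step u0 (v ++ x) st; rewrite -!catA.
- exact: beq_refl.
- exact: beq_sym.
- exact: beq_trans IH1 IH2.
Qed.

Lemma beq_cat u u' x x' : beq n u u' -> beq n x x' -> beq n (u ++ x) (u' ++ x').
Proof. by move=> eu ex; apply: beq_trans (beq_catr x eu) (beq_catl u' ex). Qed.

Lemma beq_winvl w : valid n w -> beq n (winv w ++ w) [::].
Proof.
elim: w => [|[i b] w IH] /=; first by move=> _; apply: beq_refl.
move=> /andP[lt_in vw]; rewrite winv_cons -catA /=.
apply: beq_trans (IH vw).
by have := beq_step (winv w) w (bs_free (~~ b) lt_in); rewrite negbK.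
Qed.

Lemma beq_winvr w : valid n w -> beq n (w ++ winv w) [::].
Proof. by move=> vw; have := beq_winvl (w := winv w); rewrite winvK valid_winv; apply. Qed.

Lemma beq_cancel_mid S x y : valid n S -> beq n (x ++ S ++ winv S ++ y) (x ++ y).
Proof.
by move=> vS; apply: beq_catl; rewrite catA -{2}[y]cat0s; apply: beq_catr; apply: beq_winvr.
Qed.

Lemma wconj_cat S u u' : valid n S ->
  beq n (wconj S u ++ wconj S u') (wconj S (u ++ u')).
Proof.
by move=> vS; have := beq_cancel_mid (winv S ++ u) (u' ++ S) vS; rewrite /wconj -!catA.
Qed.

Lemma commw_wconj S p q : valid n S ->
  beq n (commw (wconj S p) (wconj S q)) (wconj S (commw p q)).
Proof.
move=> vS; rewrite /commw !winv_wconj.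
apply: beq_trans (beq_catl _ (beq_catl _ (wconj_cat _ _ vS))) _.
apply: beq_trans (beq_catl _ (wconj_cat _ _ vS)) _.
exact: wconj_cat.
Qed.

End BraidEquality.

Lemma beq_widen m n u v : m <= n -> beq m u v -> beq n u v.
Proof.
move=> le_mn; elim=> {u v} [u v a b st|w|w1 w2 _ IH|w1 w2 w3 _ IH1 _ IH2].
- apply: beq_step; case: st => [i b' /andP[i0 im]|i j b' c /andP[i0 im] /andP[j0 jm]|i i0 im].
  + by apply: bs_free; rewrite i0 (leq_trans im le_mn).
  + by apply: bs_comm; rewrite ?i0 ?j0 ?(leq_trans im le_mn) ?(leq_trans jm le_mn).
  + exact: bs_braid i0 (leq_trans im le_mn).
- exact: beq_refl.
- exact: beq_sym.
- exact: beq_trans IH1 IH2.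
Qed.

(* Checkable certificates for braid equalities: a move applies a defining
   relation, left to right or right to left, at a given position. *)
Inductive relator := Free of nat & bool | Braid of nat.

Definition relator_ok (n : nat) (r : relator) : bool :=
  match r with Free i _ => 0 < i < n | Braid i => (0 < i) && (i.+1 < n) end.

Definition relator_sides (r : relator) : word * word :=
  match r with
  | Free i b => ([:: (i, b); (i, ~~ b)], [::])
  | Braid i => ([:: (i, true); (i.+1, true); (i, true)],
                [:: (i.+1, true); (i, true); (i.+1, true)])
  end.

Lemma relator_step n r : relator_ok n r ->
  braid_step n (relator_sides r).1 (relator_sides r).2.
Proof. by case: r => [i b|i] /= => [|/andP[]]; [apply: bs_free | apply: bs_braid]. Qed.

Inductive move := Fwd of nat & relator | Bwd of nat & relator.

Definition apply_move (n : nat) (m : move) (w : word) : option word :=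
  let: (k, r, a, b) := match m with
    | Fwd k r => (k, r, (relator_sides r).1, (relator_sides r).2)
    | Bwd k r => (k, r, (relator_sides r).2, (relator_sides r).1) end in
  if relator_ok n r && (take (size a) (drop k w) == a)
  then Some (take k w ++ b ++ drop (size a) (drop k w)) else None.

Fixpoint run_moves (n : nat) (ms : seq move) (w : word) : option word :=
  if ms is m :: ms' then obind (run_moves n ms') (apply_move n m w) else Some w.

Lemma apply_move_beq n m w w' : apply_move n m w = Some w' -> beq n w w'.
Proof.
have split_at k j a : take j (drop k w) = a -> w = take k w ++ a ++ drop j (drop k w).
  by move=> <-; rewrite !cat_take_drop.
case: m => [k r|k r]; rewrite /apply_move /=; case: ifP => // /andP[ok /eqP/split_at ew] [<-];
  rewrite {1}ew.
- exact/beq_step/relator_step.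
- exact/beq_sym/beq_step/relator_step.
Qed.

Lemma run_moves_beq n ms w w' : run_moves n ms w = Some w' -> beq n w w'.
Proof.
elim: ms w => [|m ms IH] w /=; first by move=> [->]; apply: beq_refl.
case E: (apply_move n m w) => [u|] //= /IH; exact: beq_trans (apply_move_beq E).
Qed.

Lemma swap_atK i : involutive (swap_at i).
Proof. by move=> k; rewrite /swap_at; repeat case: ifP; move=> *; lia. Qed.

Lemma perm_act_cat u v k : perm_act (u ++ v) k = perm_act u (perm_act v k).
Proof. by rewrite /perm_act foldr_cat. Qed.

Lemma perm_act_winv w k : perm_act (winv w) (perm_act w k) = k.
Proof.
elim: w k => [|[i b] w IH] k //.
by rewrite winv_cons perm_act_cat /= swap_atK IH.
Qed.

Definition acts_trivially (w : word) : Prop := perm_act w =1 id.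

Lemma acts_trivially_wconj S p : acts_trivially p -> acts_trivially (wconj S p).
Proof. by move=> tp k; rewrite /wconj !perm_act_cat tp perm_act_winv. Qed.

Lemma acts_trivially_pure n p : acts_trivially p -> pure n p.
Proof. by move=> tp; apply/forallP => k; rewrite tp. Qed.

Lemma in_comm_PP_commw n p q : valid n p -> valid n q -> pure n p -> pure n q ->
  in_comm_PP n (commw p q).
Proof.
move=> vp vq pp pq; exists [:: (p, q)].
by rewrite /= cats0 vp vq pp pq; split=> //; apply: beq_refl.
Qed.

Lemma in_comm_PP_cat n u v : in_comm_PP n u -> in_comm_PP n v -> in_comm_PP n (u ++ v).
Proof.
move=> [ps [ok_ps eu]] [qs [ok_qs ev]]; exists (ps ++ qs).
by rewrite all_cat ok_ps ok_qs map_cat flatten_cat; split=> //; apply: beq_cat.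
Qed.

Lemma in_comm_PP_beq n w w' : beq n w w' -> in_comm_PP n w -> in_comm_PP n w'.
Proof.
by move=> ew [ps [ok_ps e]]; exists ps; split=> //; apply: beq_trans (beq_sym ew) e.
Qed.

Definition npos (w : word) : nat := count snd w.
Definition nneg (w : word) : nat := count (negb \o snd) w.

Lemma npos_winv w : npos (winv w) = nneg w.
Proof. by rewrite /npos /winv count_rev count_map. Qed.

Lemma nneg_winv w : nneg (winv w) = npos w.
Proof. by rewrite -{2}[w]winvK npos_winv. Qed.

Lemma beq_exponent_sum n w w' : beq n w w' -> npos w + nneg w' = npos w' + nneg w.
Proof.
have step_sum a b : braid_step n a b -> npos a + nneg b = npos b + nneg a.
  by case=> [i [] _|i j [] [] _ _ _|i _ _].
elim=> {w w'} [u v a b /step_sum|w|w1 w2 _|w1 w2 w3 _ IH1 _ IH2].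
- by rewrite /npos /nneg !count_cat; lia.
- by [].
- lia.
- lia.
Qed.

Lemma in_comm_PP_balanced n w : in_comm_PP n w -> npos w = nneg w.
Proof.
move=> [ps [_ /beq_exponent_sum]].
suff -> : npos (flatten [seq commw p.1 p.2 | p <- ps]) =
          nneg (flatten [seq commw p.1 p.2 | p <- ps]) by lia.
elim: ps => [|[p q] ps IH] //=.
move: IH (npos_winv p) (nneg_winv p) (npos_winv q) (nneg_winv q).
by rewrite /commw /npos /nneg !count_cat; lia.
Qed.

Definition nonneg_word (i : nat) (w : word) : bool :=
  all (fun l : letter => (0 < l.1) && (l.1 <= i)) w &&
  all (fun l : letter => (l.1 == i) ==> l.2) w.

Lemma ipos_cat i A Z B : nonneg_word i A -> ipos_word i Z -> nonneg_word i B ->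
  ipos_word i (A ++ Z ++ B).
Proof.
rewrite /nonneg_word /ipos_word !all_cat !has_cat.
move=> /andP[-> ->] /andP[/andP[-> ->] ->] /andP[-> ->].
by rewrite orbT.
Qed.

Lemma nonneg_word_valid i w : valid i w -> nonneg_word i w.
Proof.
move=> /allP vw; apply/andP; split; apply/allP => l /vw /andP[l0 li].
- by rewrite l0 ltnW.
- by rewrite ltn_eqF.
Qed.

Lemma ipos_word_gt0 i w : ipos_word i w -> 0 < i.
Proof. by move=> /andP[/andP[/allP low /hasP[l /low /andP[l0 _] /eqP <-]] _]. Qed.

Lemma ipos1_npos_gt_nneg w : ipos_word 1 w -> nneg w < npos w.
Proof.
move=> /andP[/andP[/allP low has1] /allP pos1].
have all_pos : all snd w.
  by apply/allP => l lw; apply: (implyP (pos1 l lw)); case/andP: (low l lw) => ? ?; lia.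
have -> : nneg w = 0.
  by apply/eqP; rewrite eqn0Ngt -has_count; apply/hasPn => l lw /=; rewrite (allP all_pos).
by move: all_pos; rewrite all_count /npos => /eqP ->; case: (w) has1.
Qed.

Lemma ipos_word_split i w : ipos_word i w ->
  exists A S, [/\ w = A ++ (i, true) :: S, nonneg_word i A & valid i S].
Proof.
elim: w => [|[j b] w IH] //.
case has_i: (has (fun l : letter => l.1 == i) w).
- move=> /andP[/andP[/andP[jb low] _] /andP[jpos pos]].
  have [|A [S [-> nA vS]]] := IH; first by apply/andP; split; first apply/andP.
  by exists ((j, b) :: A), S; split=> //; rewrite /nonneg_word /= jb jpos.
- move=> /andP[/andP[/andP[jb low] hi] /andP[jpos pos]].
  have ji : j = i by move: hi; rewrite /= has_i orbF => /eqP.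
  exists [::], w; split=> //; first by move: jpos; rewrite /= ji eqxx => /= ->.
  apply/allP => l lw; have /andP[l0 li] := allP low l lw.
  rewrite l0 ltn_neqAle li andbT; apply/negP => /eqP li'.
  by move/hasPn: (negbT has_i) => /(_ l lw); rewrite li' eqxx.
Qed.

Definition p1 : word := [:: (1, false); (1, false)].
Definition p2 : word := [:: (2, true); (2, true)].

Lemma acts_trivially_p1 : acts_trivially p1.
Proof. by move=> k; rewrite /= !swap_atK. Qed.

Lemma acts_trivially_p2 : acts_trivially p2.
Proof. by move=> k; rewrite /= !swap_atK. Qed.

Definition commw_p2p1_rep : word :=
  [:: (1, true); (2, true); (1, false); (2, true);
      (1, false); (2, true); (1, false); (1, false)].

Definition s2_commw_p1p2_rep : word :=
  [:: (1, false); (2, true); (1, false); (2, true); (1, false); (2, true); (2, true)].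

Lemma beq_commw_p2p1 : beq 3 (commw p2 p1) commw_p2p1_rep.
Proof.
apply: (@run_moves_beq 3 [:: Bwd 3 (Free 2 true); Bwd 4 (Free 1 true); Fwd 2 (Braid 1);
  Fwd 1 (Free 2 false); Bwd 7 (Free 1 true); Fwd 5 (Braid 1); Fwd 4 (Free 2 false);
  Fwd 3 (Free 1 false); Bwd 3 (Free 1 true); Fwd 1 (Braid 1); Fwd 0 (Free 2 false)]).
by vm_compute.
Qed.

Lemma beq_s2_commw_p1p2 : beq 3 ((2, true) :: commw p1 p2) s2_commw_p1p2_rep.
Proof.
apply: (@run_moves_beq 3 [:: Bwd 2 (Free 2 false); Bwd 0 (Free 1 false); Fwd 1 (Braid 1);
  Fwd 3 (Free 2 true); Bwd 3 (Free 1 false); Fwd 4 (Braid 1); Fwd 6 (Free 2 true);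
  Fwd 2 (Free 1 true); Bwd 2 (Free 1 false); Fwd 3 (Braid 1); Fwd 5 (Free 2 true);
  Fwd 4 (Free 1 true)]).
by vm_compute.
Qed.

Section SmallerElement.

Variable n : nat.
Hypothesis n_ge3 : 3 <= n.

Definition below_in_comm_PP (w v : word) : Prop :=
  [/\ valid n v, in_comm_PP n v, dpos n v & dpos n (winv v ++ w)].

Let valid3 u : valid 3 u -> valid n u.
Proof. exact: valid_widen. Qed.

Let beq3 u v : beq 3 u v -> beq n u v.
Proof. exact: beq_widen. Qed.

Lemma in_comm_PP_conj_p1p2 S : valid n S ->
  in_comm_PP n (commw (wconj S p1) (wconj S p2)).
Proof.
move=> vS; apply: in_comm_PP_commw; rewrite ?valid_wconj ?vS ?valid3 //;
  apply/acts_trivially_pure/acts_trivially_wconj.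
- exact: acts_trivially_p1.
- exact: acts_trivially_p2.
Qed.

Lemma below_ge3 w w' i : 3 <= i -> beq n w w' -> valid n w' -> ipos_word i w' ->
  exists v, below_in_comm_PP w v.
Proof.
move=> i_ge3 ew vw' posw'; exists (commw p2 p1); split.
- by rewrite valid_commw !valid3.
- apply: in_comm_PP_commw; rewrite ?valid3 //; apply: acts_trivially_pure.
  + exact: acts_trivially_p2.
  + exact: acts_trivially_p1.
- by exists commw_p2p1_rep; split; [apply: beq3 beq_commw_p2p1 | apply: valid3 | exists 2].
- exists (commw p1 p2 ++ w'); split.
  + by rewrite winv_commw; apply: beq_catl.
  + by rewrite valid_cat vw' valid_commw !valid3.
  + exists i; rewrite -[_ ++ w']cats0 -catA; apply: ipos_cat => //.
    exact/nonneg_word_valid/(valid_widen i_ge3).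
Qed.

Lemma below_2 w w' : valid n w -> in_comm_PP n w -> beq n w w' -> valid n w' ->
  ipos_word 2 w' -> exists v, below_in_comm_PP w v.
Proof.
move=> vw cw ew vw' /ipos_word_split[A [S [Ew' nA vS2]]].
have vS : valid n S by apply: valid_widen vS2; apply: ltnW.
have vA : valid n A by move: vw'; rewrite Ew' valid_cat => /andP[].
exists (w ++ commw (wconj S p1) (wconj S p2)); split.
- by rewrite valid_cat vw valid_commw !valid_wconj vS !valid3.
- exact: in_comm_PP_cat cw (in_comm_PP_conj_p1p2 vS).
- exists (A ++ s2_commw_p1p2_rep ++ S); split.
  + apply: beq_trans (beq_cat ew (commw_wconj p1 p2 vS)) _.
    have -> : w' ++ wconj S (commw p1 p2) =
              (A ++ [:: (2, true)]) ++ S ++ winv S ++ (commw p1 p2 ++ S).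
      by rewrite Ew' /wconj -!catA.
    apply: beq_trans (beq_cancel_mid _ _ vS) _; rewrite -catA (catA [:: _]).
    exact/beq_catl/beq_catr/beq3/beq_s2_commw_p1p2.
  + by rewrite !valid_cat vA vS valid3.
  + by exists 2; apply: ipos_cat nA _ (nonneg_word_valid vS2).
- exists (wconj S commw_p2p1_rep); split.
  + rewrite winv_cat winv_commw -catA.
    apply: beq_trans (beq_catl _ (beq_winvl vw)) _; rewrite cats0.
    apply: beq_trans (commw_wconj p2 p1 vS) _.
    exact/beq_catl/beq_catr/beq3/beq_commw_p2p1.
  + by rewrite valid_wconj vS valid3.
  + by exists 2; apply: ipos_cat; rewrite ?nonneg_word_valid ?valid_winv.
Qed.

End SmallerElement.

Theorem proposition3p3 (n : nat) : 3 <= n -> densely_ordered_sub n (in_comm_PP n).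
Proof.
move=> n_ge3 w vw cw [w' [ew vw' [i posw']]].
have cw' := in_comm_PP_beq ew cw.
have := ipos_word_gt0 posw'.
case: (ltngtP i 2) => [i_lt2|i_gt2|i2] i_gt0.
- have i1 : i = 1 by lia.
  rewrite i1 in posw'.
  by have := ipos1_npos_gt_nneg posw'; rewrite (in_comm_PP_balanced cw') ltnn.
- exact: below_ge3 i_gt2 ew vw' posw'.
- rewrite i2 in posw'.
  exact: below_2 vw cw ew vw' posw'.
Qed.
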